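(* Let $\bm X=[\bm x_1,\dots,\bm x_p]\in\mathbb{R}^{n\times p}$ have full column rank and unit-norm columns, let $M\ge1$ be an integer with $n\ge p+M$, and fix $j\in[p]$. Let $\bm X_{\backslash j}$ be $\bm X$ with column $j$ removed, $\bm U_{\backslash j}\in\mathbb{R}^{n\times(p-1)}$ a matrix whose orthonormal columns span the column space of $\bm X_{\backslash j}$, and $\sigma_j^2=\|\bm x_j-\bm U_{\backslash j}\bm U_{\backslash j}^\top\bm x_j\|^2$. Suppose $s_j\in[0,\frac{M+1}{M}\sigma_j^2]$, and let $\bm e_M\in\mathbb{R}^M$ be the all-ones vector. Then the matrix $\bm A_j=s_j\bm I_M+s_j(1-s_j/\sigma_j^2)\bm e_M\bm e_M^\top$ is positive semidefinite. Moreover, let $\bm C\in\mathbb{R}^{M\times M}$ satisfy $\bm C^\top\bm C=\bm A_j$, let $\bm R\in\mathbb{R}^{n\times M}$ have orthonormal columns with $\bm X^\top\bm R=\bm 0$, and define $$\widetilde{\bm X}^{(j)}=[\widetilde{\bm x}_j^{(1)},\dots,\widetilde{\bm x}_j^{(M)}]=\Big[\frac{s_j}{\sigma_j^2}\bm U_{\backslash j}\bm U_{\backslash j}^\top\bm x_j+\Big(1-\frac{s_j}{\sigma_j^2}\Big)\bm x_j\Big]\bm e_M^\top+\bm R\bm C.$$ Then for each $m\in[M]$: (i) $\bm x_i^\top\widetilde{\bm x}_j^{(m)}=\bm x_i^\top\bm x_j$ for all $i\in[p]\setminus\{j\}$; (ii) $\bm x_j^\top\widetilde{\bm x}_j^{(m)}=1-s_j$;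 (iii) $(\widetilde{\bm x}_j^{(m)})^\top\widetilde{\bm x}_j^{(m)}=1$; (iv) $(\widetilde{\bm x}_j^{(m)})^\top\widetilde{\bm x}_j^{(\ell)}=1-s_j$ for all $\ell\in[M]\setminus\{m\}$. *)

From mathcomp Require Import all_boot all_algebra.
From mathcomp Require Import reals.
Set Implicit Arguments. Unset Strict Implicit. Unset Printing Implicit Defensive.
Import GRing.Theory Num.Theory.
Local Open Scope ring_scope.

Definition psdmx (R : realType) (m : nat) (A : 'M[R]_m) : Prop :=
  A^T = A /\ forall v : 'cV[R]_m, 0 <= (v^T *m A *m v) 0 0.

Definition sigma2 (R : realType) (n p q : nat) (X : 'M[R]_(n, p))
  (U : 'M[R]_(n, q)) (j : 'I_p) : R :=
  let v := col j X - U *m U^T *m col j X in (v^T *m v) 0 0.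

Definition ones (R : realType) (a b : nat) : 'M[R]_(a, b) := const_mx 1.

Definition Amx (R : realType) (M : nat) (s sig2 : R) : 'M[R]_M :=
  s%:M + (s * (1 - s / sig2)) *: ones R M M.

Definition Xtilde (R : realType) (n p q M : nat) (X : 'M[R]_(n, p))
  (U : 'M[R]_(n, q)) (j : 'I_p) (s : R) (Rm : 'M[R]_(n, M)) (C : 'M[R]_M)
  : 'M[R]_(n, M) :=
  let sg := sigma2 X U j in
  ((s / sg) *: (U *m U^T *m col j X) + (1 - s / sg) *: col j X) *m ones R 1 M
  + Rm *m C.

(* Let r = x_j - U U^T x_j be the residual of x_j, so that sigma_j^2 = r^T r = x_j^T r
   and r is orthogonal to every other column x_i, which lies in the range of U.
   Each knockoff column is v + R c_m with v = x_j - (s / sigma_j^2) r; v lies in the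
   column space of X, hence is orthogonal to R.  So the x_i only see v, giving (i)
   and (ii), and the Gram matrix of the knockoffs is v^T v e e^T + C^T C, where
   v^T v = 1 - 2 s + s^2 / sigma_j^2 exactly cancels the rank-one part of A_j.
   For A_j = s I + b e e^T the quadratic form is s |u|^2 + b (sum u)^2, which is
   nonnegative by Cauchy-Schwarz (sum u)^2 <= M |u|^2 as long as s + M b >= 0,
   i.e. s <= (M + 1) / M sigma_j^2. *)

From mathcomp Require Import all_boot all_algebra.
From mathcomp Require Import reals.
From mathcomp Require Import ring lra order.
Set Implicit Arguments. Unset Strict Implicit. Unset Printing Implicit Defensive.
Import Order.TTheory GRing.Theory Num.Theory.
Local Open Scope ring_scope.

Lemma sqr_sum_le (R : realDomainType) (I : finType) (v : I -> R) :
  (\sum_i v i) ^+ 2 <= #|I|%:R * \sum_i v i ^+ 2.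
Proof.
suff: (\sum_i v i) ^+ 2 *+ 2 <= (#|I|%:R * \sum_i v i ^+ 2) *+ 2.
  by rewrite lerMn2r.
have -> : (\sum_i v i) ^+ 2 *+ 2 = \sum_i \sum_k (v i * v k) *+ 2.
  rewrite expr2 mulr_suml -sumrMnl; apply: eq_bigr => i _.
  by rewrite mulr_sumr -sumrMnl.
have -> : (#|I|%:R * \sum_i v i ^+ 2) *+ 2 = \sum_i \sum_k (v i ^+ 2 + v k ^+ 2).
  under [RHS]eq_bigr do rewrite big_split /= sumr_const.
  by rewrite big_split /= sumr_const sumrMnl mulr2n mulr_natl.
apply: ler_sum => i _; apply: ler_sum => k _.
by rewrite -subr_ge0 addrAC -sqrrB sqr_ge0.
Qed.

Lemma qform_scalar_add_ones (R : realType) M (a b : R) (v : 'cV[R]_M) :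
  (v^T *m (a%:M + b *: ones R M M) *m v) 0 0
  = a * \sum_i v i 0 ^+ 2 + b * (\sum_i v i 0) ^+ 2.
Proof.
rewrite mulmxDr mulmxDl mul_mx_scalar -scalemxAl -!scalemxAr -scalemxAl !mxE.
congr (_ * _ + _ * _); first by apply: eq_bigr => i _; rewrite !mxE expr2.
rewrite expr2 mulr_suml; apply: eq_bigr => i _.
rewrite !mxE mulr_sumr mulrC mulr_sumr; apply: eq_bigr => k _.
by rewrite !mxE mulr1 mulrC.
Qed.

Lemma psdmx_scalar_add_ones (R : realType) M (a b : R) :
  0 <= a -> 0 <= a + M%:R * b -> psdmx (a%:M + b *: ones R M M).
Proof.
move=> a_ge0 ab_ge0; split.
  by rewrite linearD /= tr_scalar_mx linearZ /= trmx_const.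
move=> v; rewrite qform_scalar_add_ones.
have := sqr_sum_le (fun i => v i 0); rewrite card_ord.
set S := \sum_i v i 0 ^+ 2; set q := \sum_i v i 0 => q_le.
have S_ge0 : 0 <= S by apply: sumr_ge0 => i _; exact: sqr_ge0.
have [b_ge0|b_lt0] := lerP 0 b.
  by apply: addr_ge0; apply: mulr_ge0; rewrite // sqr_ge0.
have : 0 <= (a + M%:R * b) * S + (- b) * (M%:R * S - q ^+ 2).
  by apply: addr_ge0; apply: mulr_ge0; rewrite // ?oppr_ge0 ?subr_ge0 // ltW.
lra.
Qed.

Section DominatedRatio.
Variables (R : realFieldType) (k s t : R).
Hypotheses (s_ge0 : 0 <= s) (s_le : s <= k * t).

Lemma ler_div_dominated : 0 <= k -> s / t <= k.
Proof.
have [t_gt0|t_le0] := ltrP 0 t; first by rewrite ler_pdivrMr.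
move=> k_ge0; suff -> : s = 0 by rewrite mul0r.
by apply/eqP; rewrite eq_le s_ge0 (le_trans s_le) // mulr_ge0_le0.
Qed.

(* [s / t] is the junk value [0] when [t = 0]; domination then forces [s = 0]. *)
Lemma divrK_dominated : s / t * t = s.
Proof.
have [t0|t_neq0] := eqVneq t 0; last by rewrite divfK.
move: s_le; rewrite t0 !mulr0 => s_le0.
by apply: le_anti; rewrite s_ge0 s_le0.
Qed.

End DominatedRatio.

Lemma psdmx_Amx (R : realType) M (s sg : R) :
  (0 < M)%N -> 0 <= s -> s <= (M.+1%:R / M%:R) * sg -> psdmx (Amx M s sg).
Proof.
move=> M_gt0 s_ge0 s_le; apply: psdmx_scalar_add_ones => //.
have M_pos : 0 < M%:R :> R by rewrite ltr0n.
have : s / sg <= M.+1%:R / M%:R by apply: ler_div_dominated; rewrite ?divr_ge0.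
rewrite ler_pdivlMr // -addn1 natrD => ratio_le.
have -> : s + M%:R * (s * (1 - s / sg)) = s * (M%:R + 1 - s / sg * M%:R) by ring.
by rewrite mulr_ge0 // subr_ge0.
Qed.

Lemma col_rank1_add (R : realType) n M (w : 'cV[R]_n) (Rm : 'M[R]_(n, M))
    (C : 'M[R]_M) m :
  col m (w *m ones R 1 M + Rm *m C) = w + Rm *m col m C.
Proof.
rewrite linearD /= !colE -!mulmxA -colE col_const.
have -> : const_mx 1 = 1%:M :> 'M[R]_1 by apply/matrixP => i k; rewrite !ord1 !mxE.
by rewrite mulmx1.
Qed.

Lemma gram_add_orthonormal (R : comPzRingType) n M (Rm : 'M[R]_(n, M)) (w : 'cV[R]_n)
    (c d : 'cV[R]_M) :
  Rm^T *m Rm = 1%:M -> w^T *m Rm = 0 ->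
  (w + Rm *m c)^T *m (w + Rm *m d) = w^T *m w + c^T *m d.
Proof.
move=> Rm_orthonormal wRm; rewrite [(w + _)^T]linearD /= mulmxDl !mulmxDr.
have w_orth e : w^T *m (Rm *m e) = 0 :> 'M_1 by rewrite mulmxA wRm mul0mx.
have -> : (Rm *m c)^T *m w = 0 by rewrite -[w]trmxK -trmx_mul w_orth trmx0.
by rewrite w_orth trmx_mul mulmxA -(mulmxA _ Rm^T) Rm_orthonormal mulmx1 addr0 add0r.
Qed.

Lemma tr_col_mul_col (R : comPzRingType) k M (C : 'M[R]_(k, M)) m l :
  (col m C)^T *m col l C = ((C^T *m C) m l)%:M.
Proof.
rewrite [LHS]mx11_scalar !mxE; congr _%:M.
by apply: eq_bigr => i _; rewrite !mxE.
Qed.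

Lemma tr_col_sub_col' (F : fieldType) n p (X : 'M[F]_(n, p)) i j :
  i != j -> ((col i X)^T <= (col' j X)^T)%MS.
Proof.
case: (unliftP j i) => [k ->|->]; last by rewrite eqxx.
by move=> _; rewrite tr_col'; apply: (eq_row_sub k); apply/rowP => l; rewrite !mxE.
Qed.

Section OrthogonalProjection.
Variables (F : fieldType) (n q : nat) (U : 'M[F]_(n, q)).
Hypothesis U_orthonormal : U^T *m U = 1%:M.

Lemma mulmx_proj_sub k (y : 'M[F]_(k, n)) : (y <= U^T)%MS -> y *m (U *m U^T) = y.
Proof. by case/submxP => D ->; rewrite mulmxA -(mulmxA D) U_orthonormal mulmx1. Qed.

Lemma residual_orth k (y : 'M[F]_(k, n)) (x : 'cV[F]_n) :
  (y <= U^T)%MS -> y *m (x - U *m U^T *m x) = 0.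
Proof. by move=> yU; rewrite mulmxBr mulmxA mulmx_proj_sub // subrr. Qed.

Lemma residual_gram (x : 'cV[F]_n) :
  (x - U *m U^T *m x)^T *m (x - U *m U^T *m x) = x^T *m (x - U *m U^T *m x).
Proof.
rewrite [(x - _)^T]linearB /= mulmxBl !trmx_mul trmxK.
by rewrite (residual_orth (y := x^T *m (U *m U^T))) ?subr0 // mulmxA submxMl.
Qed.

Lemma tr_residual_sub k (S : 'M[F]_(k, n)) (x : 'cV[F]_n) :
  (x^T <= S)%MS -> (U^T <= S)%MS -> ((x - U *m U^T *m x)^T <= S)%MS.
Proof.
move=> xS US; rewrite [(x - _)^T]linearB /= !trmx_mul trmxK addmx_sub ?eqmx_opp //.
by rewrite mulmxA (submx_trans (submxMl _ _)).
Qed.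

End OrthogonalProjection.

Section Knockoff.
Variables (R : realType) (n p q M : nat) (X : 'M[R]_(n, p)) (j : 'I_p).
Variables (U : 'M[R]_(n, q)) (s c : R) (C : 'M[R]_M) (Rm : 'M[R]_(n, M)).
Hypotheses (xj_unit : (col j X)^T *m col j X = 1%:M) (U_orthonormal : U^T *m U = 1%:M).
Hypothesis U_span : (U^T == (col' j X)^T)%MS.
Hypotheses (s_ge0 : 0 <= s) (s_le : s <= c * sigma2 X U j).
Hypotheses (CC : C^T *m C = Amx M s (sigma2 X U j)) (Rm_orthonormal : Rm^T *m Rm = 1%:M).
Hypothesis X_orth_Rm : X^T *m Rm = 0.

Let x := col j X.
Let r := x - U *m U^T *m x.
Let sg := sigma2 X U j.
Let a := s / sg.
Let v := x - a *: r.
Let Xt := Xtilde X U j s Rm C.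

Lemma col_Xtilde m : col m Xt = v + Rm *m col m C.
Proof.
rewrite /Xt /Xtilde col_rank1_add; congr (_ + _).
by rewrite /v /r /a /sg /x scalerBl scale1r scalerBr opprB addrCA.
Qed.

Lemma X_sub_kermx : (X^T <= kermx Rm)%MS.
Proof. by rewrite sub_kermx X_orth_Rm. Qed.

Lemma tr_col_orth_Rm i : (col i X)^T *m Rm = 0.
Proof. by apply/sub_kermxP; rewrite tr_col (submx_trans (row_sub _ _) X_sub_kermx). Qed.

Lemma tr_v_orth_Rm : v^T *m Rm = 0.
Proof.
apply/sub_kermxP; rewrite [v^T]linearB linearZ /= addmx_sub ?eqmx_opp ?scalemx_sub //.
  exact/sub_kermxP/tr_col_orth_Rm.
apply: tr_residual_sub => //; first exact/sub_kermxP/tr_col_orth_Rm.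
case/andP: U_span => UX _; apply: submx_trans UX _.
by rewrite tr_col' (submx_trans (rowsub_sub _ _) X_sub_kermx).
Qed.

Lemma sigma2E : x^T *m r = sg%:M.
Proof. by rewrite -residual_gram // [LHS]mx11_scalar. Qed.

Lemma v_gram : v^T *m v = (1 - s *+ 2 + a * s)%:M.
Proof.
have rx : r^T *m x = sg%:M by rewrite -[x in _ *m x]trmxK -trmx_mul sigma2E tr_scalar_mx.
rewrite [v^T]linearB linearZ /= mulmxBl !mulmxBr -!scalemxAl -!scalemxAr.
rewrite xj_unit sigma2E rx residual_gram // sigma2E.
have asg : a * sg = s := divrK_dominated s_ge0 s_le.
apply/matrixP => i k; rewrite !ord1 !mxE eqxx /= -asg; ring.
Qed.

Lemma Xtilde_other i m : i != j -> (col i X)^T *m col m Xt = (col i X)^T *m x.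
Proof.
move=> ij; rewrite col_Xtilde mulmxDr mulmxA tr_col_orth_Rm mul0mx addr0.
rewrite mulmxBr -scalemxAr residual_orth ?scaler0 ?subr0 //.
by case/andP: U_span => _; apply: submx_trans (tr_col_sub_col' _ ij).
Qed.

Lemma Xtilde_self m : x^T *m col m Xt = (1 - s)%:M.
Proof.
rewrite col_Xtilde mulmxDr mulmxA tr_col_orth_Rm mul0mx addr0.
rewrite mulmxBr -scalemxAr xj_unit sigma2E scale_scalar_mx.
by rewrite /a /sg (divrK_dominated s_ge0 s_le) raddfB.
Qed.

Lemma Xtilde_gram m l : (col m Xt)^T *m col l Xt = (1 - s + s *+ (m == l))%:M.
Proof.
rewrite !col_Xtilde gram_add_orthonormal ?tr_v_orth_Rm // v_gram.
rewrite tr_col_mul_col CC !mxE mulr1.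
by rewrite -raddfD /a /sg; congr _%:M; ring.
Qed.

End Knockoff.

Theorem lemma2p1 (R : realType) (n p M : nat) (X : 'M[R]_(n, p)) (j : 'I_p)
  (U : 'M[R]_(n, p.-1)) (s : R) :
  \rank X = p ->
  (forall i : 'I_p, (col i X)^T *m col i X = 1%:M) ->
  (1 <= M)%N -> (p + M <= n)%N ->
  U^T *m U = 1%:M ->
  (U^T == (col' j X)^T)%MS ->
  0 <= s -> s <= (M.+1%:R / M%:R) * sigma2 X U j ->
  psdmx (Amx M s (sigma2 X U j)) /\
  (forall (C : 'M[R]_M) (Rm : 'M[R]_(n, M)),
     C^T *m C = Amx M s (sigma2 X U j) ->
     Rm^T *m Rm = 1%:M ->
     X^T *m Rm = 0 ->
     let Xt := Xtilde X U j s Rm C in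
     forall m : 'I_M,
       (forall i : 'I_p, i != j -> (col i X)^T *m col m Xt = (col i X)^T *m col j X) /\
       (col j X)^T *m col m Xt = (1 - s)%:M /\
       (col m Xt)^T *m col m Xt = 1%:M /\
       (forall l : 'I_M, l != m -> (col m Xt)^T *m col l Xt = (1 - s)%:M)).
Proof.
(* The rank and dimension hypotheses only ensure that [sigma2 X U j > 0] and
   that some [Rm] exists; the identities hold without them. *)
move=> _ X_unit M_gt0 _ U_orthonormal U_span s_ge0 s_le.
split; first exact: psdmx_Amx.
move=> C Rm CC Rm_orthonormal X_orth_Rm Xt m.
have xj_unit := X_unit j.
have Xt_gram := Xtilde_gram xj_unit U_orthonormal U_span s_ge0 s_le CC Rm_orthonormal X_orth_Rm.
split; [|split; [|split]].
- by move=> i ij; apply: Xtilde_other.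
- exact (Xtilde_self C xj_unit U_orthonormal s_ge0 s_le X_orth_Rm m).
- by rewrite Xt_gram eqxx subrK.
- by move=> l lm; rewrite Xt_gram eq_sym (negbTE lm) addr0.
Qed.
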